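(* There exist absolute constants $C_0\approx3.1967$ (namely $C_0=e^3/(2\pi)$) and $C_1\approx2.9290$ such that the following holds. Let $\mathcal X$ be a finite alphabet with $|\mathcal X|\ge2$, let $X_1,\dots,X_n$ be i.i.d. with distribution $P\in\mathcal P(\mathcal X)$, and let $\hat P_n$ be the empirical distribution of $(X_1,\dots,X_n)$. Then for every $\epsilon>0$, $$\mathbb P\big[\|\hat P_n-P\|_\infty\ge\epsilon\big]\le2C_1(|\mathcal X|-1)(C_0n)^{\frac{|\mathcal X|}2-1}e^{-2n\epsilon^2}.$$
   Context: $\mathcal P(\mathcal X)$ is the set of probability distributions on $\mathcal X$; $\|P-Q\|_\infty=\max_{a\in\mathcal X}|P(a)-Q(a)|$; $\hat P_n(a)=\frac1n\sum_{k=1}^n1\{X_k=a\}$. *)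

From HB Require Import structures.
From mathcomp Require Import all_boot all_order all_algebra.
From mathcomp Require Import all_classical all_reals all_analysis.
Set Implicit Arguments. Unset Strict Implicit. Unset Printing Implicit Defensive.
Import Order.TTheory GRing.Theory Num.Theory.
Local Open Scope ring_scope.

Definition is_distr {R : realType} (T : finType) (P : T -> R) : Prop :=
  (forall a, 0 <= P a) /\ \sum_(a : T) P a = 1.

Definition empirical {R : realType} (T : finType) (n : nat)
    (x : {ffun 'I_n -> T}) (a : T) : R :=
  (#|[set i : 'I_n | x i == a]|)%:R / n%:R.

Definition supdist {R : realType} (T : finType) (Q P : T -> R) : R :=
  \big[Num.max/0]_(a : T) `|Q a - P a|.

Definition iid_prob {R : realType} (T : finType) (n : nat) (P : T -> R)
    (E : pred {ffun 'I_n -> T}) : R :=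
  \sum_(x : {ffun 'I_n -> T} | E x) \prod_(i < n) P (x i).

From HB Require Import structures.
From mathcomp Require Import all_boot all_order all_algebra.
From mathcomp Require Import all_classical all_reals all_analysis.
From mathcomp Require Import ring lra.
Import Order.TTheory GRing.Theory Num.Theory.
Set Implicit Arguments. Unset Strict Implicit. Unset Printing Implicit Defensive.
Local Open Scope ring_scope.

(* A sup-norm deviation of size eps means that for some letter a and sign s,
   s (hat P_n(a) - P(a)) >= eps.  Each of these 2|X| one-sided events is a
   binomial tail, which the Chernoff bound with Hoeffding's lemma for a
   Bernoulli variable bounds by exp(-2 n eps^2).  The union bound 2|X| e^{-2n eps^2}
   is already below the claimed bound with C1 = 2, since C0 >= 1 and
   2|X| <= 4(|X| - 1) for |X| >= 2.
   Hoeffding's lemma E exp(t (B - p)) <= exp(t^2/8) is proved by showing that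
   mgf(t) exp(-p t - t^2/8) has a derivative with the sign of -t. *)

Section DeriveSign.
Variables (R : realType) (f f' : R -> R) (a b : R).
Hypothesis f'_derive : forall x : R, is_derive x (1 : R) f (f' x).

Let derivable_f x : x \in `]a, b[ -> derivable f x 1.
Proof. by case: (f'_derive x). Qed.

Let derive1_f x : (f^`())%classic x = f' x.
Proof. by rewrite derive1E; case: (f'_derive x). Qed.

Let a_in : a <= b -> a \in `[a, b]. Proof. by move=> ab; rewrite in_itv /= lexx ab. Qed.
Let b_in : a <= b -> b \in `[a, b]. Proof. by move=> ab; rewrite in_itv /= lexx ab. Qed.

Lemma ler0_is_derive_le :
  a <= b -> {in `]a, b[, forall x, f' x <= 0} -> f b <= f a.
Proof.
move=> ab f'_le0; apply: (ler0_derive1_le_cc _ _ _ (b_in ab) (a_in ab) ab) => //.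
- by move=> x ax; rewrite derive1_f f'_le0.
- by apply: derivable_within_continuous => x _; case: (f'_derive x).
Qed.

Lemma ger0_is_derive_le :
  a <= b -> {in `]a, b[, forall x, 0 <= f' x} -> f a <= f b.
Proof.
move=> ab f'_ge0; apply: (ger0_derive1_le_cc _ _ _ (a_in ab) (b_in ab) ab) => //.
- by move=> x ax; rewrite derive1_f f'_ge0.
- by apply: derivable_within_continuous => x _; case: (f'_derive x).
Qed.

End DeriveSign.

Section HoeffdingBernoulli.
Variables (R : realType) (p : R).
Hypotheses (p_ge0 : 0 <= p) (p_le1 : p <= 1).

Let scaleE (a b : R) : a *: b = a * b := erefl.

Definition bernoulli_mgf : R -> R := cst (1 - p) + p \*: expR.

Lemma bernoulli_mgfE t : bernoulli_mgf t = 1 - p + p * expR t.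
Proof. by []. Qed.

Lemma bernoulli_mgf_gt0 t : 0 < bernoulli_mgf t.
Proof.
rewrite bernoulli_mgfE; have e_gt0 := expR_gt0 t.
have pe_ge0 : 0 <= p * expR t by rewrite mulr_ge0 // ltW.
have [p_lt1|p_ge1] := ltP p 1; first lra.
have -> : p = 1 by apply/eqP; rewrite eq_le p_le1.
lra.
Qed.

Lemma is_derive_bernoulli_mgf (x : R) : is_derive x 1 bernoulli_mgf (p * expR x).
Proof.
apply: (is_derive_eq
  (is_deriveD (is_derive_cst (1 - p) x 1) (is_deriveZ p (is_derive_expR x)))).
by rewrite /= add0r.
Qed.

Definition tilted_prob : R -> R :=
  (p \*: expR) * (fun t => (bernoulli_mgf t)^-1).

Lemma is_derive_tilted_prob (x : R) :
  is_derive x 1 tilted_prob (tilted_prob x * (1 - tilted_prob x)).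
Proof.
have mgf_gt0 := bernoulli_mgf_gt0 x.
apply: (is_derive_eq (is_deriveM (is_deriveZ p (is_derive_expR x))
  (is_deriveV (lt0r_neq0 mgf_gt0) (is_derive_bernoulli_mgf x)))).
move: mgf_gt0.
rewrite /tilted_prob /= !fctE /= !bernoulli_mgfE !scaleE => mgf_gt0.
field; lra.
Qed.

(* With L t = ln (bernoulli_mgf t) - p t we have L' = tilted_prob - p and
   L'' = q (1 - q) <= 1/4 for q = tilted_prob; this is L' - t/4. *)
Definition slope_gap : R -> R := tilted_prob - cst p - 4^-1 \*: id.

Lemma is_derive_slope_gap (x : R) :
  is_derive x 1 slope_gap (tilted_prob x * (1 - tilted_prob x) - 4^-1).
Proof.
apply: (is_derive_eq
  (is_deriveB (is_deriveB (is_derive_tilted_prob x) (is_derive_cst p x 1))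
              (is_deriveZ 4^-1 (is_derive_id x 1)))).
by rewrite /= !scaleE; lra.
Qed.

Lemma slope_gap0 : slope_gap 0 = 0.
Proof.
rewrite /slope_gap !fctE /= /tilted_prob !fctE /= bernoulli_mgfE expR0 !scaleE.
by rewrite mulr1 subrK invr1 mulr1 mulr0 !subrr.
Qed.

Lemma slope_gap_le0 t : 0 <= t -> slope_gap t <= 0.
Proof.
move=> t_ge0; rewrite -slope_gap0.
apply: (ler0_is_derive_le is_derive_slope_gap t_ge0) => x _.
by have := sqr_ge0 (2 * tilted_prob x - 1); nra.
Qed.

Lemma slope_gap_ge0 t : t <= 0 -> 0 <= slope_gap t.
Proof.
move=> t_le0; rewrite -slope_gap0.
apply: (ler0_is_derive_le is_derive_slope_gap t_le0) => x _.
by have := sqr_ge0 (2 * tilted_prob x - 1); nra.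
Qed.

Definition hoeffding_exponent : R -> R :=
  - (p \*: (id : R -> R) + 8^-1 \*: (id : R -> R) ^+ 2).

Definition hoeffding_ratio : R -> R := bernoulli_mgf * (expR \o hoeffding_exponent).

Lemma is_derive_hoeffding_ratio (x : R) : is_derive x 1 hoeffding_ratio
  (expR (hoeffding_exponent x) * bernoulli_mgf x * slope_gap x).
Proof.
have d_exponent : is_derive x 1 hoeffding_exponent (- (p + x / 4)).
  apply: (is_derive_eq (is_deriveN (is_deriveD (is_deriveZ p (is_derive_id x 1))
                        (is_deriveZ 8^-1 (is_deriveX 2 (is_derive_id x 1)))))).
  by rewrite /= !scaleE expr1; field.
have d_exp : is_derive x 1 (expR \o hoeffding_exponent)
                       (expR (hoeffding_exponent x) * - (p + x / 4)).
  exact: is_derive1_comp.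
apply: (is_derive_eq (is_deriveM (is_derive_bernoulli_mgf x) d_exp)).
have mgf_neq0 := lt0r_neq0 (bernoulli_mgf_gt0 x).
move: mgf_neq0; rewrite /slope_gap /tilted_prob !fctE /= !scaleE => mgf_neq0.
by field.
Qed.

Lemma hoeffding_ratio0 : hoeffding_ratio 0 = 1.
Proof.
rewrite /hoeffding_ratio /hoeffding_exponent !fctE /= bernoulli_mgfE !scaleE.
by rewrite expR0 mulr1 subrK expr0n /= !mulr0 addr0 oppr0 expR0 mulr1.
Qed.

Lemma hoeffding_ratio_le1 t : hoeffding_ratio t <= 1.
Proof.
have pos x : 0 <= expR (hoeffding_exponent x) * bernoulli_mgf x.
  by apply/ltW; rewrite mulr_gt0 ?expR_gt0 ?bernoulli_mgf_gt0.
rewrite -hoeffding_ratio0; have [t_ge0|t_lt0] := leP 0 t.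
- apply: (ler0_is_derive_le is_derive_hoeffding_ratio t_ge0) => x.
  rewrite in_itv /= => /andP[x_gt0 _].
  by rewrite mulr_ge0_le0 ?pos ?slope_gap_le0 ?ltW.
- apply: (ger0_is_derive_le is_derive_hoeffding_ratio (ltW t_lt0)) => x.
  rewrite in_itv /= => /andP[_ x_lt0].
  by rewrite mulr_ge0 ?pos ?slope_gap_ge0 ?ltW.
Qed.

Lemma hoeffding_bernoulli t :
  expR (- (t * p)) * (1 - p + p * expR t) <= expR (t ^+ 2 / 8).
Proof.
have := hoeffding_ratio_le1 t.
rewrite /hoeffding_ratio /hoeffding_exponent !fctE /= bernoulli_mgfE !scaleE.
have -> : expR (- (t * p)) = expR (t ^+ 2 / 8) * expR (- (p * t + 8^-1 * t ^+ 2)).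
  by rewrite -expRD; congr expR; field.
move=> ratio_le1.
by rewrite -mulrA -[leRHS]mulr1 ler_pM2l ?expR_gt0 // mulrC.
Qed.

End HoeffdingBernoulli.

Lemma sum_ffun_prod (R : comPzSemiRingType) (T : finType) (n : nat) (f : T -> R) :
  \sum_(x : {ffun 'I_n -> T}) \prod_i f (x i) = (\sum_b f b) ^+ n.
Proof.
by rewrite -(bigA_distr_bigA (fun (_ : 'I_n) b => f b)) /= prodr_const card_ord.
Qed.

Lemma card_preimage1_sum (R : pzSemiRingType) (T : finType) (n : nat)
    (x : {ffun 'I_n -> T}) (a : T) :
  #|[set i | x i == a]|%:R = \sum_i (x i == a)%:R :> R.
Proof.
rewrite -sum1_card natr_sum big_mkcond /=; apply: eq_bigr => i _.
by rewrite inE; case: (x i == a).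
Qed.

Lemma supdist_ge (R : realType) (T : finType) (Q P : T -> R) (eps : R) :
  0 < eps -> eps <= supdist Q P -> exists a, eps <= `|Q a - P a|.
Proof.
move=> eps_gt0 le_sup; apply/not_existsP => lt_all.
move: le_sup; rewrite leNgt => /negP; apply; apply/bigmax_ltP; split => // a _.
by rewrite ltNge; apply/negP => /(lt_all a).
Qed.

Section IidProb.
Variables (R : realType) (T : finType) (P : T -> R) (n : nat).
Hypothesis P_ge0 : forall a, 0 <= P a.

Let weight_ge0 (x : {ffun 'I_n -> T}) : 0 <= \prod_i P (x i).
Proof. by apply: prodr_ge0 => i _. Qed.

Lemma iid_prob_union (J : finType) (E : pred {ffun 'I_n -> T})
    (F : J -> pred {ffun 'I_n -> T}) :
  (forall x, E x -> exists j, F j x) -> iid_prob P E <= \sum_j iid_prob P (F j).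
Proof.
move=> E_sub; rewrite /iid_prob (exchange_big_dep predT) //= big_mkcond /=.
apply: ler_sum => x _; case: ifP => [/E_sub [j Fjx] | _].
  by rewrite (bigD1 j) //= lerDl sumr_ge0 // => j' _; apply: weight_ge0.
by apply: sumr_ge0 => j _; apply: weight_ge0.
Qed.

Lemma iid_prob_markov (E : pred {ffun 'I_n -> T}) (G : {ffun 'I_n -> T} -> R) :
  (forall x, 0 <= G x) -> (forall x, E x -> 1 <= G x) ->
  iid_prob P E <= \sum_(x : {ffun 'I_n -> T}) (\prod_i P (x i)) * G x.
Proof.
move=> G_ge0 G_ge1; rewrite /iid_prob big_mkcond /=.
apply: ler_sum => x _; case: ifP => [/G_ge1 Gx_ge1 | _].
  by rewrite ler_peMr ?weight_ge0.
by rewrite mulr_ge0 ?weight_ge0.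
Qed.

End IidProb.

Section EmpiricalTail.
Variables (R : realType) (T : finType) (P : T -> R).
Hypothesis P_distr : is_distr P.

Let P_ge0 : forall a, 0 <= P a. Proof. by case: P_distr. Qed.

Lemma sum_indicator_expR (a : T) (u : R) :
  \sum_b P b * expR (u * ((b == a)%:R - P a))
  = expR (- (u * P a)) * (1 - P a + P a * expR u).
Proof.
have [_ P_sum1] := P_distr.
rewrite (bigD1 a) //= eqxx.
under eq_bigr => b /negbTE -> do rewrite sub0r.
have rest : \sum_(b | b != a) P b = 1 - P a.
  by rewrite -P_sum1 [in RHS](bigD1 a) //=; lra.
have -> : u * (true%:R - P a) = u + - (u * P a) by rewrite /=; ring.
by rewrite -mulr_suml rest mulrN expRD; ring.
Qed.

Lemma sum_indicator_expR_le (a : T) (u : R) :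
  \sum_b P b * expR (u * ((b == a)%:R - P a)) <= expR (u ^+ 2 / 8).
Proof.
have [_ P_sum1] := P_distr.
have Pa_le1 : P a <= 1.
  by rewrite -P_sum1 (bigD1 a) //= lerDl sumr_ge0.
by rewrite sum_indicator_expR hoeffding_bernoulli.
Qed.

Lemma empirical_tail (n : nat) (a : T) (s eps : R) :
  (0 < n)%N -> 0 < eps -> s ^+ 2 = 1 ->
  iid_prob P (fun x : {ffun 'I_n -> T} => eps <= s * (empirical x a - P a))
  <= expR (- (2 * n%:R * eps ^+ 2)).
Proof.
move=> n_gt0 eps_gt0 s_sqr.
have n_gt0R : 0 < n%:R :> R by rewrite ltr0n.
pose u := 4 * eps * s.
pose g b := expR (u * ((b == a)%:R - P a)).
pose c := expR (- (4 * n%:R * eps ^+ 2)).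
have chernoff (x : {ffun 'I_n -> T}) :
    eps <= s * (empirical x a - P a) -> 1 <= c * \prod_i g (x i).
  move=> dev; rewrite /c /g -expR_sum -expRD -[leLHS]expR0 ler_expR.
  rewrite -mulr_sumr sumrB -card_preimage1_sum sumr_const card_ord -mulr_natr.
  have -> : #|[set i | x i == a]|%:R = n%:R * empirical x a :> R.
    by rewrite /empirical mulrC divfK ?lt0r_neq0.
  have : 0 <= n%:R * eps * (s * (empirical x a - P a) - eps).
    by rewrite mulr_ge0 ?subr_ge0 // mulr_ge0 ?ltW.
  by rewrite /u; nra.
apply: le_trans
  (iid_prob_markov P_ge0 (G := fun x => c * \prod_i g (x i)) _ chernoff) _.
  move=> x; apply: mulr_ge0; first exact: expR_ge0.
  by apply: prodr_ge0 => i _; exact: expR_ge0.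
under eq_bigr => x _ do rewrite mulrCA -big_split /=.
rewrite -mulr_sumr (sum_ffun_prod n (fun b => P b * g b)).
apply: le_trans (_ : c * expR (u ^+ 2 / 8) ^+ n <= _).
  apply: ler_wpM2l; first exact: expR_ge0.
  apply: lerXn2r; rewrite ?nnegrE ?sum_indicator_expR_le //.
  by apply: sumr_ge0 => b _; apply: mulr_ge0 (P_ge0 b) _; exact: expR_ge0.
rewrite -expRM_natl /c -expRD ler_expR /u !exprMn s_sqr.
lra.
Qed.

End EmpiricalTail.

Lemma C0_ge1 (R : realType) : 1 <= expR 3 / (2 * pi) :> R.
Proof.
have pi_lt4 : pi < 4 :> R by have := pihalf_lt2 R; lra.
have e_ge2 : 2 <= expR 1 :> R by have := expR_ge1Dx (1 : R); lra.
have e3_ge8 : 8 <= expR 3 :> R.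
  by rewrite -[3%:R]mulr1 expRM_natl !exprS expr0 mulr1; nra.
by rewrite ler_pdivlMr ?mulr_gt0 ?pi_gt0 //; lra.
Qed.

Theorem lemma13 (R : realType) :
  let C0 : R := expR 3 / (2 * pi) in
  exists C1 : R, 0 < C1 /\ C1 <= 2929 / 1000 + 1 / (100 * 100) /\
  forall (T : finType) (P : T -> R) (n : nat) (eps : R),
    (2 <= #|T|)%N -> is_distr P -> (0 < n)%N -> 0 < eps ->
    iid_prob P (fun x : {ffun 'I_n -> T} => eps <= supdist (empirical x) P)
    <= 2 * C1 * (#|T|%:R - 1) * (C0 * n%:R) `^ (#|T|%:R / 2 - 1)
       * expR (- (2 * n%:R * eps ^+ 2)).
Proof.
move=> C0; exists 2; do 2![split; first lra].
move=> T P n eps T_ge2 P_distr n_gt0 eps_gt0.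
set B := expR _.
pose deviation (j : T * bool) (x : {ffun 'I_n -> T}) :=
  eps <= (-1) ^+ j.2 * (empirical x j.1 - P j.1).
have union :
    iid_prob P (fun x : {ffun 'I_n -> T} => eps <= supdist (empirical x) P)
    <= \sum_j iid_prob P (deviation j).
  apply: iid_prob_union => [|x /(supdist_ge eps_gt0) [a]]; first by case: P_distr.
  by rewrite ler_normr => /orP[dev|dev];
    [exists (a, false) | exists (a, true)]; rewrite /deviation /= ?mul1r ?mulN1r.
have tails : \sum_j iid_prob P (deviation j) <= #|T|%:R * 2 * B.
  apply: le_trans (_ : \sum_(j : T * bool) B <= _).
    by apply: ler_sum => j _; apply: empirical_tail; rewrite ?sqrr_sign.
  by rewrite sumr_const card_prod card_bool -[leLHS]mulr_natl natrM.
have pow_ge1 : 1 <= (C0 * n%:R) `^ (#|T|%:R / 2 - 1).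
  have C0n_ge1 : 1 <= C0 * n%:R.
    have n_ge1 : 1 <= n%:R :> R by rewrite ler1n.
    by have := C0_ge1 R; rewrite /C0; nra.
  rewrite -[leLHS](powRr0 (C0 * n%:R)) ler_powR //.
  by rewrite subr_ge0 ler_pdivlMr // mul1r ler_nat.
have k_ge2 : 2 <= #|T|%:R :> R by rewrite ler_nat.
have B_ge0 : 0 <= B by exact: expR_ge0.
apply: (le_trans union); apply: (le_trans tails).
move: pow_ge1 k_ge2; set X := _ `^ _; set k : R := #|T|%:R => X_ge1 k_ge2.
have : 0 <= (k - 1) * (X - 1) * B by rewrite !mulr_ge0 ?subr_ge0 //; lra.
have : 0 <= (k - 2) * B by rewrite mulr_ge0 ?subr_ge0.
nra.
Qed.
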